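(* Let $\mathcal{A} = \langle \Sigma, Q, \Delta, q_0\rangle$ be a substochastic automaton and $K$ a regular language over $Q \times \Sigma \times Q$ accepted by a deterministic finite automaton $\mathcal{K}=\langle Q \times \Sigma \times Q, Q_K, \Delta_K, q_K, F\rangle$. Then $\mathbf{P}_\mathcal{A}(K) = L^{\mathcal{A} \| \mathcal{K}}_{(q_0, q_K)}$.
   Context: A substochastic automaton (SA) is a tuple $\langle \Sigma, Q, \Delta, q_0\rangle$ with $\Sigma$ a finite alphabet, $Q$ a finite set of states, $q_0$ the initial state and $\Delta: Q \to ((\Sigma\times Q)\uplus\{\mathrm{stop}\}\to[0,1])$, where $\mathrm{stop}$ is a special termination action, such that $\sum_x \Delta(q)(x) \le 1$ for every $q$. A complete run from $q$ is a finite sequence $q \xrightarrow{a_1} q_1 \cdots \xrightarrow{a_n} q_n\,\mathrm{stop}$ of positive-probability transitions followed by termination; $CRun_q(\mathcal{A})$ denotes the set of complete runs from $q$ and $CRun(\mathcal{A}) = CRun_{q_0}(\mathcal{A})$. The weight of a complete run is $\mathbf{P}_\mathcal{A}(q\,\mathrm{stop}) = \Delta(q)(\mathrm{stop})$ and $\mathbf{P}_\mathcal{A}(q\xrightarrow{a}\rho) = \Delta(q)(a,r)\cdot\mathbf{P}_\mathcal{A}(\rho)$ with $r$ the first state of $\rho$. For an SA $\mathcal{B}$ and state $q$, $L^{\mathcal{B}}_q = \mathbf{P}_{\mathcal{B}}(CRun_q(\mathcal{B}))$. $\mathbf{P}_\mathcal{A}(K)$ is the sum of $\mathbf{P}_\mathcal{A}(\rho)$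 over complete runs $\rho\in CRun(\mathcal{A})$ whose sequence of transitions $(q_{i-1},a_i,q_i)$ forms a word in $K$. The synchronized product $\mathcal{A}\|\mathcal{K}$ is the SA $\langle \Sigma, Q\times Q_K, \Delta', (q_0,q_K)\rangle$ where, for $\mu = \Delta(q_1)$, $\Delta'(q_1,r_1) = \nu$ with $\nu(a,(q_2,r_2)) = \mu(a,q_2)$ if $r_1 \xrightarrow{(q_1,a,q_2)} r_2 \in \Delta_K$ and $0$ otherwise, and $\nu(\mathrm{stop}) = \mu(\mathrm{stop})$ if $r_1\in F$ and $0$ otherwise. *)

From HB Require Import structures.
From mathcomp Require Import all_boot all_order all_algebra.
From mathcomp Require Import classical_sets reals constructive_ereal ereal esum.
Set Implicit Arguments. Unset Strict Implicit. Unset Printing Implicit Defensive.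
Import Order.TTheory GRing.Theory Num.Theory.
Local Open Scope ring_scope.
Local Open Scope classical_set_scope.

Section SA.
Variable R : realType.

(* A transition function of a (substochastic) automaton over states S and
   alphabet Sg: [d q None] is Delta(q)(stop), [d q (Some (a, r))] is
   Delta(q)(a, r). *)
Definition trans (Sg S : Type) := S -> option (Sg * S) -> R.

Definition substochastic (Sg S : finType) (d : trans Sg S) : Prop :=
  forall q, (forall x, 0 <= d q x) /\ \sum_(x : option (Sg * S)) d q x <= 1.

Section Runs.
Variables (Sg S : choiceType) (d : trans Sg S).

(* A complete run q -a1-> q1 ... -an-> qn stop from q is represented by
   the list [:: (a1,q1); ...; (an,qn)]. *)
Fixpoint is_crun (q : S) (s : seq (Sg * S)) : bool :=
  match s with
  | [::] => 0 < d q None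
  | (a, r) :: s' => (0 < d q (Some (a, r))) && is_crun r s'
  end.

Definition CRun (q : S) : set (seq (Sg * S)) := [set s | is_crun q s].

Fixpoint run_weight (q : S) (s : seq (Sg * S)) : R :=
  match s with
  | [::] => d q None
  | (a, r) :: s' => d q (Some (a, r)) * run_weight r s'
  end.

Fixpoint trans_word (q : S) (s : seq (Sg * S)) : seq (S * Sg * S) :=
  match s with
  | [::] => [::]
  | (a, r) :: s' => (q, a, r) :: trans_word r s'
  end.

Definition Lval (q : S) : \bar R :=
  \esum_(s in CRun q) (run_weight q s)%:E.

Definition Pmeas (q0 : S) (K : set (seq (S * Sg * S))) : \bar R :=
  \esum_(s in CRun q0 `&` [set s | K (trans_word q0 s)]) (run_weight q0 s)%:E.
End Runs.

Section DFA.
Variables (X : Type) (QK : finType) (dK : QK -> X -> option QK).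

Fixpoint dfa_run (r : QK) (w : seq X) : option QK :=
  match w with
  | [::] => Some r
  | x :: w' => match dK r x with Some r' => dfa_run r' w' | None => None end
  end.

Definition dfa_accepts (F : {set QK}) (r0 : QK) (w : seq X) : bool :=
  match dfa_run r0 w with Some r => r \in F | None => false end.
End DFA.

Definition sync_prod (Sg Q QK : finType) (d : trans Sg Q)
  (dK : QK -> Q * Sg * Q -> option QK) (F : {set QK}) : trans Sg (Q * QK) :=
  fun p x =>
    let: (q1, r1) := p in
    match x with
    | None => if r1 \in F then d q1 None else 0
    | Some (a, (q2, r2)) =>
        if dK r1 (q1, a, q2) == Some r2 then d q1 (Some (a, q2)) else 0
    end.

End SA.

(* A complete run of A whose transition word is accepted by K lifts
   uniquely to a complete run of A || K with the same weight, by running the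
   deterministic automaton K alongside; conversely every complete run of
   A || K projects to such a run of A.  Reindexing the sum along this
   bijection gives the equality. *)
From mathcomp Require Import all_boot all_order all_algebra.
From mathcomp Require Import classical_sets functions reals constructive_ereal.
From mathcomp Require Import ereal esum.
Set Implicit Arguments. Unset Strict Implicit. Unset Printing Implicit Defensive.
Import Order.TTheory GRing.Theory Num.Theory.
Local Open Scope ring_scope.
Local Open Scope classical_set_scope.

Section SyncProductRuns.
Variables (R : realType) (Sg Q QK : finType) (d : trans R Sg Q)
  (dK : QK -> Q * Sg * Q -> option QK) (F : {set QK}).

Local Notation dAK := (sync_prod d dK F).

Lemma dfa_accepts_cons r x w :
  dfa_accepts dK F r (x :: w) =
  if dK r x is Some r' then dfa_accepts dK F r' w else false.
Proof. by rewrite /dfa_accepts /=; case: (dK r x). Qed.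

(* When [dK] is undefined the component of [K] is left unchanged; such
   lifts are never complete runs of [A || K], so the junk value is harmless. *)
Fixpoint lift_run (q : Q) (r : QK) (s : seq (Sg * Q)) : seq (Sg * (Q * QK)) :=
  if s is (a, q') :: s' then
    let r' := odflt r (dK r (q, a, q')) in (a, (q', r')) :: lift_run q' r' s'
  else [::].

Definition proj_run (t : seq (Sg * (Q * QK))) : seq (Sg * Q) :=
  [seq (x.1, x.2.1) | x <- t].

Lemma lift_runK q r s : proj_run (lift_run q r s) = s.
Proof. by elim: s q r => [|[a q'] s IH] q r //=; rewrite IH. Qed.

Lemma is_crun_lift q r s :
  is_crun d q s -> dfa_accepts dK F r (trans_word q s) ->
  is_crun dAK (q, r) (lift_run q r s).
Proof.
elim: s q r => [|[a q'] s IH] q r /=; first by rewrite /dfa_accepts /= => ? ->.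
rewrite dfa_accepts_cons => /andP[dpos crun].
by case: (dK r _) => [r'|] // acc; rewrite eqxx dpos IH.
Qed.

Lemma run_weight_lift q r s :
  dfa_accepts dK F r (trans_word q s) ->
  run_weight dAK (q, r) (lift_run q r s) = run_weight d q s.
Proof.
elim: s q r => [|[a q'] s IH] q r /=; first by rewrite /dfa_accepts /= => ->.
by rewrite dfa_accepts_cons; case: (dK r _) => [r'|] // acc; rewrite eqxx IH.
Qed.

Lemma is_crun_proj q r t : is_crun dAK (q, r) t ->
  [/\ is_crun d q (proj_run t), dfa_accepts dK F r (trans_word q (proj_run t))
    & lift_run q r (proj_run t) = t].
Proof.
elim: t q r => [|[a [q' r']] t IH] q r /=.
  by rewrite /dfa_accepts /=; case: (r \in F); rewrite ?ltxx.
case: eqP => [dKr|_]; last by rewrite ltxx.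
case/andP=> dpos /IH[crun acc lift_proj].
by rewrite dfa_accepts_cons dKr dpos crun acc lift_proj.
Qed.

Lemma lift_run_bij q r :
  set_bij (CRun d q `&` [set s | dfa_accepts dK F r (trans_word q s)])
          (CRun dAK (q, r)) (lift_run q r).
Proof.
split.
- by move=> s [crun acc]; exact: is_crun_lift.
- by move=> s1 s2 _ _ lift_eq; rewrite -(lift_runK q r s1) lift_eq lift_runK.
- move=> t /is_crun_proj[crun acc lift_proj].
  by exists (proj_run t).
Qed.

Lemma esum_lift_run q r (w : seq (Sg * (Q * QK)) -> \bar R) :
  \esum_(t in CRun dAK (q, r)) w t =
  \esum_(s in CRun d q `&` [set s | dfa_accepts dK F r (trans_word q s)])
    w (lift_run q r s).
Proof. exact: (reindex_esum _ _ _ w (lift_run_bij q r)). Qed.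

End SyncProductRuns.

Theorem lemma2 (R : realType) (Sg Q : finType) (d : trans R Sg Q)
  (HA : substochastic d) (q0 : Q)
  (QK : finType) (dK : QK -> Q * Sg * Q -> option QK) (qK : QK) (F : {set QK})
  (K : set (seq (Q * Sg * Q)))
  (HK : forall w, K w <-> dfa_accepts dK F qK w) :
  Pmeas d q0 K = Lval (sync_prod d dK F) (q0, qK).
Proof.
have K_acc : [set s | K (trans_word q0 s)] =
             [set s | dfa_accepts dK F qK (trans_word q0 s)].
  by apply/seteqP; split => s /HK.
rewrite /Pmeas /Lval K_acc esum_lift_run.
by apply: eq_esum => s [_ acc]; rewrite run_weight_lift.
Qed.
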